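(* Let $H_n=\sum_{j=1}^n\frac1j$, let $\gamma$ be the Euler–Mascheroni constant, $\Gamma$ the gamma function, and for real $z$ and positive integer $k$ let $z^{\overline{k}} = z(z+1) \cdots (z + k -1)$ be the rising factorial (Pochhammer symbol). For $k \in \{1, 2, 3, \ldots \}$ and $x > 0$, $$\sum_{n=1}^\infty (-1)^n \left(H_n -\log\sqrt[k]{(n+ x - 1)^{\overline{k}}} - \gamma \right) = \frac{\gamma}{2} + \frac{1}{k}\log\left[\frac{\Gamma\left(\frac{x+k}{2}\right)}{ \Gamma\left(\frac{x}{2} \right)}\right].$$ *)

From Stdlib Require Import Reals.
From Coquelicot Require Import Coquelicot.
Open Scope R_scope.

Fixpoint harmonic (n : nat) : R :=
  match n with
  | O => 0
  | S m => harmonic m + / INR (S m)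
  end.

Definition euler_gamma : R :=
  real (Lim_seq (fun n => harmonic n - ln (INR n))).

Definition Gamma (s : R) : R :=
  RInt_gen (fun t => Rpower t (s - 1) * exp (- t))
           (at_right 0) (Rbar_locally p_infty).

Fixpoint rising (z : R) (k : nat) : R :=
  match k with
  | O => 1
  | S m => rising z m * (z + INR m)
  end.

From Stdlib Require Import Reals Lra Lia.
From Coquelicot Require Import Coquelicot.
Open Scope R_scope.

(* Pairing the terms n = 2j+1 and n = 2j+2 makes the series telescope: since
   ln z = ln Γ(z+1) - ln Γ(z), its partial sum up to n = 2N is P(N) - P(0) with
     P(N) = ½ H_N - (1/k) (ln Γ(x/2 + k/2 + N) - ln Γ(x/2 + N))
          = ½ (H_N - ln N) - (1/k) (ln Γ(x/2 + k/2 + N) - ln Γ(x/2 + N) - (k/2) ln N).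
   The first bracket tends to γ.  The second tends to 0 by k applications of Gautschi's
   inequality  y Γ(y) / √(y+½) <= Γ(y+½) <= √y Γ(y),  which is AM-GM applied under the
   Gamma integral.  As the terms tend to 0, the odd partial sums have the same limit. *)

(** * The Gamma integral *)

Definition gamma_integrand (s t : R) : R := Rpower t (s - 1) * exp (- t).

Definition half_line_filter : (R * R -> Prop) -> Prop :=
  filter_prod (at_right 0) (Rbar_locally p_infty).

#[local] Instance half_line_filter_proper : ProperFilter half_line_filter.
Proof.
  exact (@filter_prod_proper _ _ _ _ (at_right_proper_filter 0) (Rbar_locally_filter p_infty)).
Qed.

Lemma half_line_filter_intro (P : R -> R -> Prop) (d L : R) : 0 < d ->
  (forall a b, 0 < a < d -> L < b -> P a b) ->
  half_line_filter (fun ab => P (fst ab) (snd ab)).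
Proof.
  intros Hd HP. apply Filter_prod with (fun a => 0 < a < d) (fun b => L < b).
  - exists (mkposreal d Hd). intros a Ha Ha0.
    change (Rabs (a - 0) < d) in Ha. rewrite Rminus_0_r, Rabs_pos_eq in Ha; lra.
  - exists L. auto.
  - intros a b Ha Hb. exact (HP a b Ha Hb).
Qed.

Lemma half_line_filter_segment (P : R -> Prop) : (forall t, 0 < t -> P t) ->
  half_line_filter (fun ab =>
    forall t, Rmin (fst ab) (snd ab) <= t <= Rmax (fst ab) (snd ab) -> P t).
Proof.
  intros HP.
  apply (half_line_filter_intro (fun a b => forall t, Rmin a b <= t <= Rmax a b -> P t) 1 0);
    [lra |].
  intros a b Ha Hb t Ht. apply HP. pose proof (Rmin_glb_lt a b 0 (proj1 Ha) Hb). lra.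
Qed.

Lemma gamma_integrand_pos (s t : R) : 0 < gamma_integrand s t.
Proof. apply Rmult_lt_0_compat; apply exp_pos. Qed.

Lemma continuous_gamma_integrand (s t : R) : 0 < t -> continuous (gamma_integrand s) t.
Proof.
  intros Ht. apply (ex_derive_continuous (K := R_AbsRing) (V := R_NormedModule)).
  unfold gamma_integrand, Rpower. auto_derive. lra.
Qed.

Lemma ex_RInt_gamma_integrand (s a b : R) : 0 < a -> 0 < b -> ex_RInt (gamma_integrand s) a b.
Proof.
  intros Ha Hb. apply (ex_RInt_continuous (V := R_CompleteNormedModule)). intros t Ht.
  apply continuous_gamma_integrand.
  assert (0 < Rmin a b) by (apply Rmin_glb_lt; lra). lra.
Qed.

Lemma abs_RInt_le_of_le (f g : R -> R) (u v : R) :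
  ex_RInt f u v -> ex_RInt g u v ->
  (forall t, Rmin u v <= t <= Rmax u v -> 0 <= f t <= g t) ->
  Rabs (RInt f u v) <= Rabs (RInt g u v).
Proof.
  revert u v.
  assert (Hle : forall u v, u <= v -> ex_RInt f u v -> ex_RInt g u v ->
            (forall t, Rmin u v <= t <= Rmax u v -> 0 <= f t <= g t) ->
            Rabs (RInt f u v) <= Rabs (RInt g u v)).
  { intros u v Huv Hf Hg Hfg. rewrite Rmin_left, Rmax_right in Hfg by exact Huv.
    assert (0 <= RInt f u v) by (apply RInt_ge_0; auto; intros t Ht; apply Hfg; lra).
    assert (RInt f u v <= RInt g u v) by (apply RInt_le; auto; intros t Ht; apply Hfg; lra).
    rewrite !Rabs_pos_eq; lra. }
  intros u v Hf Hg Hfg. destruct (Rle_dec u v) as [Huv | Hvu]; [now apply Hle |].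
  rewrite <- (opp_RInt_swap f), <- (opp_RInt_swap g) by (apply ex_RInt_swap; assumption).
  change (Rabs (- RInt f v u) <= Rabs (- RInt g v u)). rewrite !Rabs_Ropp.
  apply Hle; try (apply ex_RInt_swap; assumption); [lra |].
  rewrite Rmin_comm, Rmax_comm. exact Hfg.
Qed.

Lemma is_RInt_Rpower_pred (s u v : R) : 0 < s -> 0 < u -> 0 < v ->
  is_RInt (fun t => Rpower t (s - 1)) u v ((Rpower v s - Rpower u s) / s).
Proof.
  intros Hs Hu Hv. assert (Hm : 0 < Rmin u v) by (apply Rmin_glb_lt; lra).
  replace ((Rpower v s - Rpower u s) / s) with (minus (Rpower v s / s) (Rpower u s / s))
    by (unfold minus, plus, opp; simpl; field; lra).
  apply (is_RInt_derive (V := R_CompleteNormedModule) (fun t => Rpower t s / s)).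
  - intros t Ht. unfold Rpower. auto_derive; [lra |].
    replace ((s - 1) * ln t) with (s * ln t + - ln t) by ring.
    rewrite exp_plus, exp_Ropp, exp_ln by lra. field. lra.
  - intros t Ht. apply (ex_derive_continuous (K := R_AbsRing) (V := R_NormedModule)).
    unfold Rpower. auto_derive. lra.
Qed.

Lemma is_RInt_exp_neg_half (C u v : R) :
  is_RInt (fun t => C * exp (- t / 2)) u v (2 * C * (exp (- u / 2) - exp (- v / 2))).
Proof.
  replace (2 * C * (exp (- u / 2) - exp (- v / 2)))
    with (minus (-2 * C * exp (- v / 2)) (-2 * C * exp (- u / 2)))
    by (unfold minus, plus, opp; simpl; ring).
  apply (is_RInt_derive (V := R_CompleteNormedModule) (fun t => -2 * C * exp (- t / 2))).
  - intros t _. auto_derive; [easy | unfold Rdiv; field].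
  - intros t _. apply (ex_derive_continuous (K := R_AbsRing) (V := R_NormedModule)).
    auto_derive. easy.
Qed.

(* [t^p = (2p)^p (t/(2p))^p <= (2p)^p e^(t/2)] with [p >= s - 1]. *)
Lemma gamma_integrand_le_exp_neg_half (s : R) :
  exists C, 0 < C /\ forall t, 1 <= t -> gamma_integrand s t <= C * exp (- t / 2).
Proof.
  set (p := Rabs s + 1).
  assert (Hp : 0 < p) by (unfold p; pose proof (Rabs_pos s); lra).
  exists (Rpower (2 * p) p). split; [apply exp_pos |]. intros t Ht.
  assert (Hpow : Rpower t (s - 1) <= Rpower t p).
  { apply Rle_Rpower; [lra |]. unfold p. pose proof (Rle_abs s). lra. }
  assert (Hexp : Rpower t p <= Rpower (2 * p) p * exp (t / 2)).
  { replace t with (2 * p * (t / (2 * p))) at 1 by (field; lra).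
    rewrite <- Rpower_mult_distr by (try apply Rdiv_lt_0_compat; lra).
    apply Rmult_le_compat_l; [left; apply exp_pos |].
    replace (exp (t / 2)) with (Rpower (exp (t / (2 * p))) p)
      by (unfold Rpower; rewrite ln_exp; f_equal; field; lra).
    apply Rle_Rpower_l; [lra |]. split; [apply Rdiv_lt_0_compat; lra |].
    pose proof (exp_ineq1_le (t / (2 * p))). lra. }
  unfold gamma_integrand. pose proof (exp_pos (- t)).
  apply Rle_trans with (Rpower (2 * p) p * exp (t / 2) * exp (- t)); [nra |].
  rewrite Rmult_assoc, <- exp_plus. right. do 2 f_equal. field.
Qed.

Lemma abs_RInt_gamma_integrand_near_0 (s d u v : R) : 0 < s -> 0 < u <= d -> 0 < v <= d ->
  Rabs (RInt (gamma_integrand s) u v) <= Rpower d s / s.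
Proof.
  intros Hs Hu Hv. eapply Rle_trans.
  - apply abs_RInt_le_of_le with (g := fun t => Rpower t (s - 1)).
    + apply ex_RInt_gamma_integrand; lra.
    + eexists. apply is_RInt_Rpower_pred; lra.
    + intros t Ht. assert (0 < t) by (pose proof (Rmin_glb_lt u v 0 (proj1 Hu) (proj1 Hv)); lra).
      unfold gamma_integrand. split; [left; apply gamma_integrand_pos |].
      assert (exp (- t) <= 1) by (rewrite <- exp_0; left; apply exp_increasing; lra).
      pose proof (exp_pos ((s - 1) * ln t)). unfold Rpower. nra.
  - rewrite (is_RInt_unique _ _ _ _ (is_RInt_Rpower_pred s u v Hs ltac:(lra) ltac:(lra))).
    assert (Hu' : Rpower u s <= Rpower d s) by (apply Rle_Rpower_l; lra).
    assert (Hv' : Rpower v s <= Rpower d s) by (apply Rle_Rpower_l; lra).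
    pose proof (exp_pos (s * ln u)). pose proof (exp_pos (s * ln v)).
    unfold Rdiv. rewrite Rabs_mult, (Rabs_pos_eq (/ s)) by (left; apply Rinv_0_lt_compat; lra).
    apply Rmult_le_compat_r; [left; apply Rinv_0_lt_compat; lra |].
    unfold Rpower in *. apply Rabs_le. lra.
Qed.

Lemma abs_RInt_gamma_integrand_tail (s : R) :
  exists C, 0 < C /\ forall L u v, 1 <= L -> L <= u -> L <= v ->
    Rabs (RInt (gamma_integrand s) u v) <= 2 * C * exp (- L / 2).
Proof.
  destruct (gamma_integrand_le_exp_neg_half s) as [C [HC Hbound]].
  exists C. split; [exact HC |]. intros L u v HL Hu Hv. eapply Rle_trans.
  - apply abs_RInt_le_of_le with (g := fun t => C * exp (- t / 2)).
    + apply ex_RInt_gamma_integrand; lra.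
    + eexists. apply is_RInt_exp_neg_half.
    + intros t Ht. assert (L <= t) by (pose proof (Rmin_glb u v L Hu Hv); lra).
      split; [left; apply gamma_integrand_pos | apply Hbound; lra].
  - rewrite (is_RInt_unique _ _ _ _ (is_RInt_exp_neg_half C u v)).
    assert (Hmono : forall w, L <= w -> 0 < exp (- w / 2) <= exp (- L / 2)).
    { intros w Hw. split; [apply exp_pos |].
      destruct (Req_dec w L) as [-> | Hne]; [lra | left; apply exp_increasing; lra]. }
    destruct (Hmono u Hu), (Hmono v Hv).
    rewrite Rabs_mult, (Rabs_pos_eq (2 * C)) by lra.
    apply Rmult_le_compat_l; [lra |]. apply Rabs_le. lra.
Qed.

Lemma improper_RInt_cauchy (f : R -> R) :
  (forall a b, 0 < a -> 0 < b -> ex_RInt f a b) ->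
  (forall eps : posreal, exists d, 0 < d /\
     forall u v, 0 < u < d -> 0 < v < d -> Rabs (RInt f u v) < eps) ->
  (forall eps : posreal, exists L,
     forall u v, L < u -> L < v -> Rabs (RInt f u v) < eps) ->
  exists l, filterlim (fun ab => RInt f (fst ab) (snd ab)) half_line_filter (locally l).
Proof.
  intros Hex H0 Hinf. apply filterlim_locally_cauchy. intros eps.
  destruct (H0 (pos_div_2 eps)) as [d [Hd Hnear0]].
  destruct (Hinf (pos_div_2 eps)) as [L Htail]. simpl in Hnear0, Htail.
  exists (fun ab => 0 < fst ab < d /\ Rmax 0 L < snd ab). split.
  - apply (half_line_filter_intro (fun a b => 0 < a < d /\ Rmax 0 L < b) d (Rmax 0 L)); auto.
  - intros [a b] [a' b'] [Ha Hb] [Ha' Hb']. simpl in *.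
    pose proof (Rmax_l 0 L). pose proof (Rmax_r 0 L).
    change (Rabs (RInt f a' b' - RInt f a b) < eps).
    assert (E1 := RInt_Chasles f a a' b (Hex a a' ltac:(lra) ltac:(lra))
                                      (Hex a' b ltac:(lra) ltac:(lra))).
    assert (E2 := RInt_Chasles f a' b' b (Hex a' b' ltac:(lra) ltac:(lra))
                                        (Hex b' b ltac:(lra) ltac:(lra))).
    change plus with Rplus in E1, E2. simpl in E1, E2.
    specialize (Hnear0 a a' Ha Ha'). specialize (Htail b' b ltac:(lra) ltac:(lra)).
    replace (RInt f a' b' - RInt f a b) with (- (RInt f a a' + RInt f b' b)) by lra.
    rewrite Rabs_Ropp. eapply Rle_lt_trans; [apply Rabs_triang | lra].
Qed.

Lemma is_RInt_gen_of_cvg (f : R -> R) (l : R) :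
  (forall a b, 0 < a -> 0 < b -> ex_RInt f a b) ->
  filterlim (fun ab => RInt f (fst ab) (snd ab)) half_line_filter (locally l) ->
  is_RInt_gen f (at_right 0) (Rbar_locally p_infty) l.
Proof.
  intros Hex Hl. apply (filterlimi_lim_ext_loc (fun ab => RInt f (fst ab) (snd ab))); [| exact Hl].
  apply (half_line_filter_intro (fun a b => is_RInt f a b (RInt f a b)) 1 0); [lra |].
  intros a b Ha Hb. apply (RInt_correct (V := R_CompleteNormedModule)). apply Hex; lra.
Qed.

Lemma exp_neg_half_le (C eps : R) : 0 < C -> 0 < eps ->
  exists L, 1 <= L /\ C * exp (- L / 2) <= eps.
Proof.
  intros HC Heps. exists (Rmax 1 (- 2 * ln (eps / C))). split; [apply Rmax_l |].
  assert (Hlog : exp (- Rmax 1 (- 2 * ln (eps / C)) / 2) <= exp (ln (eps / C))).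
  { pose proof (Rmax_r 1 (- 2 * ln (eps / C))).
    destruct (Req_dec (- Rmax 1 (- 2 * ln (eps / C)) / 2) (ln (eps / C))) as [-> | Hne];
      [lra | left; apply exp_increasing; lra]. }
  rewrite exp_ln in Hlog by (apply Rdiv_lt_0_compat; lra).
  apply Rmult_le_compat_l with (r := C) in Hlog; [|lra].
  replace (C * (eps / C)) with eps in Hlog by (field; lra). exact Hlog.
Qed.

Lemma Gamma_cvg (s : R) : 0 < s ->
  filterlim (fun ab => RInt (gamma_integrand s) (fst ab) (snd ab)) half_line_filter
    (locally (Gamma s)).
Proof.
  intros Hs. destruct (improper_RInt_cauchy (gamma_integrand s)) as [l Hl].
  - apply ex_RInt_gamma_integrand.
  - intros eps. pose proof (cond_pos eps).
    set (d := Rpower (s * eps / 2) (/ s)).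
    assert (Hd : Rpower d s / s = eps / 2).
    { unfold d. rewrite Rpower_mult, Rinv_l, Rpower_1 by nra. field. lra. }
    exists d. split; [apply exp_pos |]. intros u v Hu Hv.
    apply Rle_lt_trans with (Rpower d s / s); [apply abs_RInt_gamma_integrand_near_0; lra |].
    lra.
  - intros eps. destruct (abs_RInt_gamma_integrand_tail s) as [C [HC Htail]].
    destruct (exp_neg_half_le (2 * C) (eps / 2)) as [L [HL HCL]]; [lra | apply is_pos_div_2 |].
    exists L. intros u v Hu Hv. eapply Rle_lt_trans; [apply (Htail L); lra |].
    pose proof (cond_pos eps). lra.
  - replace (Gamma s) with l; [exact Hl |]. symmetry.
    apply (is_RInt_gen_unique (gamma_integrand s)).
    apply is_RInt_gen_of_cvg; [apply ex_RInt_gamma_integrand | exact Hl].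
Qed.

Lemma is_RInt_gen_Gamma (s : R) : 0 < s ->
  is_RInt_gen (gamma_integrand s) (at_right 0) (Rbar_locally p_infty) (Gamma s).
Proof.
  intros Hs. apply is_RInt_gen_of_cvg; [apply ex_RInt_gamma_integrand | exact (Gamma_cvg s Hs)].
Qed.

Lemma Gamma_pos (s : R) : 0 < s -> 0 < Gamma s.
Proof.
  intros Hs.
  assert (H12 : 0 < RInt (gamma_integrand s) 1 2).
  { apply RInt_gt_0; [lra | intros; apply gamma_integrand_pos |].
    intros t Ht. apply continuous_gamma_integrand. lra. }
  apply Rlt_le_trans with (1 := H12).
  apply (closed_filterlim_loc _ (fun y => RInt (gamma_integrand s) 1 2 <= y) _ (Gamma_cvg s Hs));
    [| apply closed_ge].
  apply (half_line_filter_intro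
           (fun a b => RInt (gamma_integrand s) 1 2 <= RInt (gamma_integrand s) a b) 1 2);
    [lra |].
  intros a b Ha Hb.
  pose proof (ex_RInt_gamma_integrand s) as Hex.
  assert (E1 := RInt_Chasles _ a 1 b (Hex a 1 ltac:(lra) ltac:(lra))
                                     (Hex 1 b ltac:(lra) ltac:(lra))).
  assert (E2 := RInt_Chasles _ 1 2 b (Hex 1 2 ltac:(lra) ltac:(lra))
                                     (Hex 2 b ltac:(lra) ltac:(lra))).
  change plus with Rplus in E1, E2. simpl in E1, E2.
  assert (0 <= RInt (gamma_integrand s) a 1).
  { apply RInt_ge_0; [lra | apply Hex; lra | intros; left; apply gamma_integrand_pos]. }
  assert (0 <= RInt (gamma_integrand s) 2 b).
  { apply RInt_ge_0; [lra | apply Hex; lra | intros; left; apply gamma_integrand_pos]. }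
  lra.
Qed.

Lemma gamma_integrand_lim_0 (s : R) : 0 < s ->
  filterlim (gamma_integrand (s + 1)) (at_right 0) (locally 0).
Proof.
  intros Hs. apply filterlim_locally. intros eps. pose proof (cond_pos eps).
  set (d := Rpower eps (/ s)).
  exists (mkposreal d (exp_pos _)). intros t Ht Ht0.
  change (Rabs (t - 0) < d) in Ht. rewrite Rminus_0_r, Rabs_pos_eq in Ht by lra.
  change (Rabs (gamma_integrand (s + 1) t - 0) < eps).
  rewrite Rminus_0_r, Rabs_pos_eq by (left; apply gamma_integrand_pos).
  unfold gamma_integrand. replace (s + 1 - 1) with s by ring.
  assert (Hts : Rpower t s < eps).
  { assert (Hds : Rpower d s = eps) by (unfold d; rewrite Rpower_mult, Rinv_l, Rpower_1; lra).
    rewrite <- Hds. apply Rlt_Rpower_l; lra. }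
  assert (exp (- t) < 1) by (rewrite <- exp_0; apply exp_increasing; lra).
  pose proof (exp_pos (s * ln t)). unfold Rpower in *. nra.
Qed.

Lemma gamma_integrand_lim_p_infty (s : R) :
  filterlim (gamma_integrand s) (Rbar_locally p_infty) (locally 0).
Proof.
  apply filterlim_locally. intros eps. pose proof (cond_pos eps).
  destruct (gamma_integrand_le_exp_neg_half s) as [C [HC Hbound]].
  destruct (exp_neg_half_le C (eps / 2) HC ltac:(lra)) as [L [HL HCL]].
  exists L. intros t Ht.
  change (Rabs (gamma_integrand s t - 0) < eps).
  rewrite Rminus_0_r, Rabs_pos_eq by (left; apply gamma_integrand_pos).
  assert (exp (- t / 2) < exp (- L / 2)) by (apply exp_increasing; lra).
  specialize (Hbound t ltac:(lra)). nra.
Qed.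

Lemma Gamma_succ (s : R) : 0 < s -> Gamma (s + 1) = s * Gamma s.
Proof.
  intros Hs.
  assert (Hder : forall t, 0 < t -> is_derive (gamma_integrand (s + 1)) t
                   (s * gamma_integrand s t - gamma_integrand (s + 1) t)).
  { intros t Ht. unfold gamma_integrand, Rpower. auto_derive; [lra |].
    replace (s + 1 - 1) with s by ring.
    replace ((s - 1) * ln t) with (s * ln t + - ln t) by ring.
    rewrite exp_plus, (exp_Ropp (ln t)), exp_ln by lra. field. lra. }
  assert (Hparts : is_RInt_gen (fun t => s * gamma_integrand s t - gamma_integrand (s + 1) t)
                     (at_right 0) (Rbar_locally p_infty) 0).
  { apply (is_RInt_gen_ext (Derive (gamma_integrand (s + 1)))).
    { eapply filter_imp; [| apply half_line_filter_segment with
        (P := fun t => Derive (gamma_integrand (s + 1)) t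
                       = s * gamma_integrand s t - gamma_integrand (s + 1) t)].
      - intros ab Hab t Ht. apply Hab. lra.
      - intros t Ht. apply is_derive_unique, Hder, Ht. }
    enough (HD : is_RInt_gen (Derive (gamma_integrand (s + 1)))
                   (at_right 0) (Rbar_locally p_infty) (0 - 0))
      by (rewrite Rminus_0_r in HD; exact HD).
    apply is_RInt_gen_Derive.
    - apply half_line_filter_segment. intros t Ht. eexists. apply Hder, Ht.
    - apply half_line_filter_segment. intros t Ht.
      apply (continuous_ext_loc (T := R_UniformSpace) (U := R_UniformSpace) _
               (fun u => s * gamma_integrand s u - gamma_integrand (s + 1) u)).
      + apply (locally_interval _ t 0 p_infty); [exact Ht | exact I |].
        intros u Hu _. symmetry. apply is_derive_unique, Hder, Hu.
      + apply (ex_derive_continuous (K := R_AbsRing) (V := R_NormedModule)).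
        unfold gamma_integrand, Rpower. auto_derive. lra.
    - apply gamma_integrand_lim_0, Hs.
    - apply gamma_integrand_lim_p_infty. }
  pose proof (is_RInt_gen_minus _ _ _ _ (is_RInt_gen_scal _ s _ (is_RInt_gen_Gamma s Hs)) Hparts)
    as Hsucc.
  unfold Gamma at 1. apply (is_RInt_gen_unique (gamma_integrand (s + 1))).
  replace (s * Gamma s) with (minus (scal s (Gamma s)) 0)
    by (unfold minus, plus, opp, scal; simpl; unfold mult; simpl; ring).
  refine (is_RInt_gen_ext _ _ _ (filter_forall _ _) Hsucc).
  intros ab t _. unfold minus, plus, opp, scal; simpl; unfold mult; simpl. ring.
Qed.

Lemma ln_Gamma_succ (z : R) : 0 < z -> ln (Gamma (z + 1)) - ln (Gamma z) = ln z.
Proof.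
  intros Hz. rewrite Gamma_succ, ln_mult by (try apply Gamma_pos; lra). ring.
Qed.

(* [f_(y+1/2)^2 = f_y f_(y+1)], so this is AM-GM. *)
Lemma gamma_integrand_half_le (y lam t : R) : 0 < lam ->
  2 * gamma_integrand (y + / 2) t <= lam * gamma_integrand y t + gamma_integrand (y + 1) t / lam.
Proof.
  intros Hlam.
  assert (Hsq : gamma_integrand (y + / 2) t * gamma_integrand (y + / 2) t
                = gamma_integrand y t * gamma_integrand (y + 1) t).
  { unfold gamma_integrand, Rpower. rewrite <- !exp_plus. f_equal. field. }
  pose proof (gamma_integrand_pos y t). pose proof (gamma_integrand_pos (y + 1) t).
  set (P := gamma_integrand y t) in *. set (Q := gamma_integrand (y + 1) t) in *.
  set (G := gamma_integrand (y + / 2) t) in *.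
  apply Rmult_le_reg_l with lam; [exact Hlam |].
  replace (lam * (lam * P + Q / lam)) with (lam * lam * P + Q) by (field; lra).
  assert (0 <= P * (lam * lam * P - 2 * lam * G + Q)).
  { replace (P * (lam * lam * P - 2 * lam * G + Q)) with ((lam * P - G) * (lam * P - G)) by nra.
    apply Rle_0_sqr. }
  nra.
Qed.

Lemma Gamma_half_le (y : R) : 0 < y -> Gamma (y + / 2) <= sqrt y * Gamma y.
Proof.
  intros Hy. set (r := sqrt y). assert (Hr : 0 < r) by (apply sqrt_lt_R0, Hy).
  set (g := fun t => / 2 * (r * gamma_integrand y t + / r * gamma_integrand (y + 1) t)).
  assert (Hg : is_RInt_gen g (at_right 0) (Rbar_locally p_infty)
                 (/ 2 * (r * Gamma y + / r * Gamma (y + 1)))).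
  { apply (is_RInt_gen_scal (V := R_NormedModule)), (is_RInt_gen_plus (V := R_NormedModule));
      apply (is_RInt_gen_scal (V := R_NormedModule)), is_RInt_gen_Gamma; lra. }
  assert (Hpoint : half_line_filter (fun ab => forall t, fst ab <= t <= snd ab ->
                     norm (gamma_integrand (y + / 2) t) <= g t)).
  { eapply filter_imp; [| apply half_line_filter_segment with
      (P := fun t => norm (gamma_integrand (y + / 2) t) <= g t)].
    - intros ab Hab t Ht. apply Hab.
      split; [apply Rle_trans with (fst ab) | apply Rle_trans with (snd ab)];
        solve [apply Rmin_l | apply Rmax_r | lra].
    - intros t _. unfold norm, g; simpl.
      rewrite Rabs_pos_eq by (left; apply gamma_integrand_pos).
      pose proof (gamma_integrand_half_le y r t Hr). unfold Rdiv in *. lra. }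
  assert (Hordered : half_line_filter (fun ab => fst ab <= snd ab)).
  { apply (half_line_filter_intro (fun a b => a <= b) 1 1); [lra | intros; lra]. }
  pose proof (RInt_gen_norm _ g _ _ Hordered Hpoint (is_RInt_gen_Gamma (y + / 2) ltac:(lra)) Hg)
    as Hle.
  unfold norm in Hle; simpl in Hle.
  eapply Rle_trans; [apply Rle_abs | eapply Rle_trans; [exact Hle |]].
  rewrite Gamma_succ by exact Hy.
  right. replace y with (r * r) at 2 by (apply sqrt_sqrt; lra). field. lra.
Qed.

(** * Asymptotics *)

Lemma ln_le_sub_1 (z : R) : 0 < z -> ln z <= z - 1.
Proof. intros Hz. pose proof (exp_ineq1_le (ln z)). rewrite exp_ln in H by exact Hz. lra. Qed.

Lemma ln_succ_sub_ln_bounds (y : R) : 0 < y -> / (y + 1) <= ln (y + 1) - ln y <= / y.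
Proof.
  intros Hy. split.
  - pose proof (ln_le_sub_1 (y / (y + 1)) ltac:(apply Rdiv_lt_0_compat; lra)) as H.
    rewrite ln_div in H by lra. replace (y / (y + 1) - 1) with (- / (y + 1)) in H by (field; lra).
    lra.
  - pose proof (ln_le_sub_1 ((y + 1) / y) ltac:(apply Rdiv_lt_0_compat; lra)) as H.
    rewrite ln_div in H by lra. replace ((y + 1) / y - 1) with (/ y) in H by (field; lra).
    exact H.
Qed.

Lemma harmonic_ge_ln_succ (n : nat) : ln (INR n + 1) <= harmonic n.
Proof.
  induction n as [| n IH].
  - simpl. rewrite Rplus_0_l, ln_1. lra.
  - change (harmonic (S n)) with (harmonic n + / INR (S n)). rewrite S_INR.
    pose proof (ln_succ_sub_ln_bounds (INR n + 1) ltac:(pose proof (pos_INR n); lra)). lra.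
Qed.

Lemma harmonic_sub_ln_lim : is_lim_seq (fun n => harmonic n - ln (INR n)) euler_gamma.
Proof.
  set (u := fun n => harmonic (S n) - ln (INR (S n))).
  assert (Hdecr : forall n, u (S n) <= u n).
  { intros n. unfold u. change (harmonic (S (S n))) with (harmonic (S n) + / INR (S (S n))).
    rewrite (S_INR (S n)).
    pose proof (ln_succ_sub_ln_bounds (INR (S n)) (lt_0_INR _ (Nat.lt_0_succ n))). lra. }
  assert (Hpos : forall n, 0 <= u n).
  { intros n. unfold u. rewrite S_INR.
    pose proof (harmonic_ge_ln_succ (S n)) as Hharm. rewrite S_INR in Hharm.
    pose proof (pos_INR n).
    assert (ln (INR n + 1) < ln (INR n + 1 + 1)) by (apply ln_increasing; lra). lra. }
  destruct (ex_finite_lim_seq_decr u 0 Hdecr Hpos) as [l Hl].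
  assert (H : is_lim_seq (fun n => harmonic n - ln (INR n)) l) by (apply is_lim_seq_incr_1, Hl).
  unfold euler_gamma. rewrite (is_lim_seq_unique _ _ H). exact H.
Qed.

Lemma ln_shift_lim (c : R) : is_lim_seq (fun n => ln (c + INR n) - ln (INR n)) 0.
Proof.
  assert (Hinv : is_lim_seq (fun n => / INR n) 0).
  { replace (Finite 0) with (Rbar_inv p_infty) by reflexivity.
    apply is_lim_seq_inv; [apply is_lim_seq_INR | discriminate]. }
  assert (H1 : is_lim_seq (fun n => 1 + c * / INR n) 1).
  { pose proof (is_lim_seq_plus' _ _ 1 (c * 0) (is_lim_seq_const 1)
      (is_lim_seq_mult' _ _ c 0 (is_lim_seq_const c) Hinv)) as H.
    rewrite Rmult_0_r, Rplus_0_r in H. exact H. }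
  assert (Hcont : continuity_pt ln 1).
  { apply derivable_continuous_pt. exists (/ 1). apply derivable_pt_lim_ln. lra. }
  pose proof (is_lim_seq_continuous ln _ 1 Hcont H1) as H2. rewrite ln_1 in H2.
  apply (is_lim_seq_ext_loc (fun n => ln (1 + c * / INR n))); [| exact H2].
  destruct (INR_unbounded (Rabs c)) as [m Hm].
  exists (S m). intros n Hn.
  assert (INR m < INR n) by (apply lt_INR; lia).
  pose proof (pos_INR m). pose proof (Rle_abs (- c)) as Hc. rewrite Rabs_Ropp in Hc.
  rewrite <- ln_div by lra. f_equal. field. lra.
Qed.

(* Squeeze by Gautschi's inequality, i.e. [Gamma_half_le] at [y] and at [y + 1/2]. *)
Lemma ln_Gamma_add_half_lim (c : R) : 0 < c ->
  is_lim_seq (fun n => ln (Gamma (c + INR n + / 2)) - ln (Gamma (c + INR n)) - / 2 * ln (INR n)) 0.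
Proof.
  intros Hc.
  set (lower := fun n => (ln (c + INR n) - ln (INR n)) - / 2 * (ln (c + / 2 + INR n) - ln (INR n))).
  set (upper := fun n => / 2 * (ln (c + INR n) - ln (INR n))).
  apply (is_lim_seq_le_le lower _ upper).
  - intros n. set (y := c + INR n). assert (Hy : 0 < y) by (unfold y; pose proof (pos_INR n); lra).
    pose proof (Gamma_pos y Hy). pose proof (Gamma_pos (y + / 2) ltac:(lra)).
    assert (Hln_sqrt : forall z, 0 < z -> ln (sqrt z) = / 2 * ln z).
    { intros z Hz. rewrite <- Rpower_sqrt, ln_Rpower by exact Hz. reflexivity. }
    pose proof (Gamma_half_le y Hy) as Hup.
    pose proof (Gamma_half_le (y + / 2) ltac:(lra)) as Hlow.
    replace (y + / 2 + / 2) with (y + 1) in Hlow by field. rewrite Gamma_succ in Hlow by exact Hy.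
    apply ln_le in Hup; [| lra]. apply ln_le in Hlow; [| nra].
    rewrite ln_mult, Hln_sqrt in Hup by (try apply sqrt_lt_R0; lra).
    rewrite !ln_mult, Hln_sqrt in Hlow by (try apply sqrt_lt_R0; lra).
    unfold lower, upper. replace (c + / 2 + INR n) with (y + / 2) by (unfold y; ring).
    fold y. lra.
  - replace 0 with (0 - / 2 * 0) by ring. unfold lower.
    apply is_lim_seq_minus'; [apply ln_shift_lim |].
    apply (is_lim_seq_mult' _ _ _ _ (is_lim_seq_const _) (ln_shift_lim _)).
  - replace 0 with (/ 2 * 0) by ring.
    apply (is_lim_seq_mult' _ _ _ _ (is_lim_seq_const _) (ln_shift_lim _)).
Qed.

Lemma ln_Gamma_add_half_nat_lim (a : R) (k : nat) : 0 < a ->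
  is_lim_seq (fun n => ln (Gamma (a + INR k / 2 + INR n)) - ln (Gamma (a + INR n))
                       - INR k / 2 * ln (INR n)) 0.
Proof.
  intros Ha. induction k as [| k IH].
  - apply (is_lim_seq_ext (fun _ => 0)); [| apply is_lim_seq_const].
    intros n. simpl. replace (a + 0 / 2 + INR n) with (a + INR n) by field. field.
  - set (c := a + INR k / 2). assert (Hc : 0 < c) by (unfold c; pose proof (pos_INR k); lra).
    pose proof (is_lim_seq_plus' _ _ _ _ IH (ln_Gamma_add_half_lim c Hc)) as H.
    rewrite Rplus_0_r in H. eapply is_lim_seq_ext; [| exact H].
    intros n. unfold c. rewrite S_INR.
    replace (a + (INR k + 1) / 2 + INR n) with (a + INR k / 2 + INR n + / 2) by field.
    field.
Qed.

Lemma rising_pos (y : R) (k : nat) : 0 < y -> 0 < rising y k.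
Proof.
  intros Hy. induction k as [| k IH]; simpl; [lra |].
  pose proof (pos_INR k). apply Rmult_lt_0_compat; lra.
Qed.

Lemma ln_rising_succ (y : R) (k : nat) : 0 < y ->
  ln (rising (y + 1) k) - ln (rising y k) = ln (y + INR k) - ln y.
Proof.
  intros Hy.
  assert (Hshift : rising (y + 1) k * y = rising y k * (y + INR k)).
  { induction k as [| k IH]; [simpl; ring |].
    change (rising (y + 1) (S k)) with (rising (y + 1) k * (y + 1 + INR k)).
    change (rising y (S k)) with (rising y k * (y + INR k)).
    rewrite S_INR. transitivity (rising (y + 1) k * y * (y + 1 + INR k)); [ring |].
    rewrite IH. ring. }
  pose proof (rising_pos y k Hy). pose proof (rising_pos (y + 1) k ltac:(lra)).
  pose proof (pos_INR k).
  apply (f_equal ln) in Hshift. rewrite !ln_mult in Hshift by lra. lra.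
Qed.

Lemma ln_rising_lim (x : R) (k : nat) : 0 < x ->
  is_lim_seq (fun n => ln (rising (INR n + x - 1) k) - INR k * ln (INR n)) 0.
Proof.
  intros Hx. induction k as [| k IH].
  - apply (is_lim_seq_ext (fun _ => 0)); [| apply is_lim_seq_const].
    intros n. simpl. rewrite ln_1. ring.
  - pose proof (is_lim_seq_plus' _ _ _ _ IH (ln_shift_lim (x - 1 + INR k))) as H.
    rewrite Rplus_0_r in H. eapply is_lim_seq_ext_loc; [| exact H].
    exists 1%nat. intros n Hn.
    assert (1 <= INR n) by (apply (le_INR 1); lia). pose proof (pos_INR k).
    change (rising (INR n + x - 1) (S k)) with (rising (INR n + x - 1) k * (INR n + x - 1 + INR k)).
    rewrite ln_mult by (try apply rising_pos; lra). rewrite S_INR.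
    replace (x - 1 + INR k + INR n) with (INR n + x - 1 + INR k) by ring. ring.
Qed.

(** * The alternating series *)

Lemma is_series_of_odd_partial_sums (c : nat -> R) (l : R) :
  is_lim_seq (fun N => sum_n c (2 * N + 1)) l -> is_lim_seq c 0 -> is_series c l.
Proof.
  intros Hodd Hc. apply is_lim_seq_spec in Hodd, Hc.
  apply (is_lim_seq_spec (sum_n c) l). intros eps. pose proof (cond_pos eps).
  destruct (Hodd (pos_div_2 eps)) as [N1 H1]. destruct (Hc (pos_div_2 eps)) as [N2 H2].
  cbn [pos pos_div_2] in H1, H2. exists (2 * N1 + 2 + N2)%nat. intros n Hn.
  destruct (Nat.Even_or_Odd n) as [[p Hp] | [p Hp]].
  - destruct p as [| p]; [lia |].
    replace n with (S (2 * p + 1)) by lia. rewrite sum_Sn. change plus with Rplus. simpl plus.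
    specialize (H1 p ltac:(lia)). specialize (H2 (S (2 * p + 1)) ltac:(lia)).
    rewrite Rminus_0_r in H2.
    replace (sum_n c (2 * p + 1) + c (S (2 * p + 1)) - l)
      with ((sum_n c (2 * p + 1) - l) + c (S (2 * p + 1))) by ring.
    eapply Rle_lt_trans; [apply Rabs_triang | lra].
  - subst n. specialize (H1 p ltac:(lia)). lra.
Qed.

Lemma sum_n_alternating_pairs (a : nat -> R) (N : nat) :
  sum_n (fun m => (-1) ^ S m * a (S m)) (2 * N + 1)
  = sum_n (fun j => a (2 * j + 2)%nat - a (2 * j + 1)%nat) N.
Proof.
  induction N as [| N IH].
  - change (2 * 0 + 1)%nat with 1%nat. rewrite sum_Sn, !sum_O. change plus with Rplus. simpl. ring.
  - replace (2 * S N + 1)%nat with (S (S (2 * N + 1))) by lia.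
    rewrite !sum_Sn, IH. change plus with Rplus.
    assert (Hodd : (-1) ^ S (S (2 * N + 1)) = -1).
    { replace (S (S (2 * N + 1))) with (S (2 * S N)) by lia. apply pow_1_odd. }
    assert (Heven : (-1) ^ S (S (S (2 * N + 1))) = 1).
    { replace (S (S (S (2 * N + 1)))) with (2 * S (S N))%nat by lia. apply pow_1_even. }
    rewrite Hodd, Heven.
    replace (S (S (S (2 * N + 1)))) with (2 * S N + 2)%nat by lia.
    replace (S (S (2 * N + 1))) with (2 * S N + 1)%nat by lia. lra.
Qed.

Lemma sum_n_telescope (T : nat -> R) (N : nat) : sum_n (fun j => T (S j) - T j) N = T (S N) - T O.
Proof.
  induction N as [| N IH]; [now rewrite sum_O |].
  rewrite sum_Sn, IH. change plus with Rplus. lra.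
Qed.

Section AlternatingHarmonicGap.

Variables (k : nat) (x : R).
Hypotheses (Hk : (1 <= k)%nat) (Hx : 0 < x).

Definition harmonic_gap (n : nat) : R :=
  harmonic n - / INR k * ln (rising (INR n + x - 1) k) - euler_gamma.

Definition pair_primitive (j : nat) : R :=
  / 2 * harmonic j
  - / INR k * (ln (Gamma (x / 2 + INR k / 2 + INR j)) - ln (Gamma (x / 2 + INR j))).

Let Hk_pos : 0 < INR k.
Proof. apply lt_0_INR. lia. Qed.

Lemma harmonic_gap_pair (j : nat) :
  harmonic_gap (2 * j + 2) - harmonic_gap (2 * j + 1) = pair_primitive (S j) - pair_primitive j.
Proof.
  pose proof (pos_INR j).
  set (a := x / 2 + INR j). set (b := x / 2 + INR k / 2 + INR j).
  assert (Hgap : harmonic_gap (2 * j + 2) - harmonic_gap (2 * j + 1)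
                 = / (2 * (INR j + 1)) - / INR k * (ln b - ln a)).
  { unfold harmonic_gap.
    replace (2 * j + 2)%nat with (S (2 * j + 1)) by lia.
    change (harmonic (S (2 * j + 1))) with (harmonic (2 * j + 1) + / INR (S (2 * j + 1))).
    replace (INR (S (2 * j + 1)) + x - 1) with (2 * a + 1)
      by (unfold a; rewrite S_INR, plus_INR, mult_INR; simpl; field).
    replace (INR (2 * j + 1) + x - 1) with (2 * a)
      by (unfold a; rewrite plus_INR, mult_INR; simpl; field).
    replace (INR (S (2 * j + 1))) with (2 * (INR j + 1))
      by (rewrite S_INR, plus_INR, mult_INR; simpl; ring).
    pose proof (ln_rising_succ (2 * a) k ltac:(unfold a; lra)) as Hrising.
    replace (2 * a + INR k) with (2 * b) in Hrising by (unfold a, b; field).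
    rewrite !ln_mult in Hrising by (unfold a, b; lra).
    replace (ln (rising (2 * a + 1) k)) with (ln (rising (2 * a) k) + (ln b - ln a)) by lra.
    ring. }
  assert (Hprim : pair_primitive (S j) - pair_primitive j
                  = / (2 * (INR j + 1)) - / INR k * (ln b - ln a)).
  { unfold pair_primitive. fold a b.
    change (harmonic (S j)) with (harmonic j + / INR (S j)). rewrite S_INR.
    replace (x / 2 + INR k / 2 + (INR j + 1)) with (b + 1) by (unfold b; ring).
    replace (x / 2 + (INR j + 1)) with (a + 1) by (unfold a; ring).
    rewrite <- (ln_Gamma_succ a), <- (ln_Gamma_succ b) by (unfold a, b; lra).
    field. lra. }
  rewrite Hgap, Hprim. reflexivity.
Qed.

Lemma harmonic_gap_lim : is_lim_seq harmonic_gap 0.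
Proof.
  pose proof (is_lim_seq_minus' _ _ _ _
    (is_lim_seq_minus' _ _ _ _ harmonic_sub_ln_lim (is_lim_seq_const euler_gamma))
    (is_lim_seq_mult' _ _ _ _ (is_lim_seq_const (/ INR k)) (ln_rising_lim x k Hx))) as H.
  replace 0 with (euler_gamma - euler_gamma - / INR k * 0) by ring.
  eapply is_lim_seq_ext; [| exact H]. intros n. unfold harmonic_gap. field. lra.
Qed.

Lemma pair_primitive_lim : is_lim_seq pair_primitive (euler_gamma / 2).
Proof.
  pose proof (is_lim_seq_minus' _ _ _ _
    (is_lim_seq_mult' _ _ _ _ (is_lim_seq_const (/ 2)) harmonic_sub_ln_lim)
    (is_lim_seq_mult' _ _ _ _ (is_lim_seq_const (/ INR k))
       (ln_Gamma_add_half_nat_lim (x / 2) k ltac:(lra)))) as H.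
  replace (euler_gamma / 2) with (/ 2 * euler_gamma - / INR k * 0) by (unfold Rdiv; ring).
  eapply is_lim_seq_ext; [| exact H]. intros n. unfold pair_primitive. field. lra.
Qed.

Lemma is_series_alternating_harmonic_gap :
  is_series (fun m => (-1) ^ S m * harmonic_gap (S m))
    (euler_gamma / 2 + / INR k * (ln (Gamma (x / 2 + INR k / 2)) - ln (Gamma (x / 2)))).
Proof.
  apply is_series_of_odd_partial_sums.
  - replace (euler_gamma / 2 + / INR k * (ln (Gamma (x / 2 + INR k / 2)) - ln (Gamma (x / 2))))
      with (euler_gamma / 2 - pair_primitive O)
      by (unfold pair_primitive; simpl harmonic; rewrite !Rplus_0_r; ring).
    apply (is_lim_seq_ext (fun N => pair_primitive (S N) - pair_primitive O)).
    + intros N. rewrite sum_n_alternating_pairs, <- sum_n_telescope.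
      apply sum_n_ext. intros j. symmetry. apply harmonic_gap_pair.
    + apply is_lim_seq_minus'; [apply (is_lim_seq_incr_1 pair_primitive), pair_primitive_lim |].
      apply is_lim_seq_const.
  - apply is_lim_seq_abs_0.
    apply (is_lim_seq_ext (fun m => Rabs (harmonic_gap (S m)))).
    + intros m. rewrite Rabs_mult, pow_1_abs. ring.
    + apply (is_lim_seq_abs_0 (fun m => harmonic_gap (S m))), (is_lim_seq_incr_1 harmonic_gap).
      apply harmonic_gap_lim.
Qed.

End AlternatingHarmonicGap.

Theorem mainTheorem10 (k : nat) (x : R) (hk : (1 <= k)%nat) (hx : 0 < x) :
  is_series
    (fun m : nat =>
       let n := S m in
       (-1) ^ n *
       (harmonic n
        - ln (Rpower (rising (INR n + x - 1) k) (/ INR k))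
        - euler_gamma))
    (euler_gamma / 2 + / INR k * ln (Gamma ((x + INR k) / 2) / Gamma (x / 2))).
Proof.
  replace ((x + INR k) / 2) with (x / 2 + INR k / 2) by field.
  rewrite ln_div by (apply Gamma_pos; pose proof (pos_INR k); lra).
  eapply is_series_ext; [| exact (is_series_alternating_harmonic_gap k x hk hx)].
  intros m. cbv zeta. unfold harmonic_gap. rewrite ln_Rpower. reflexivity.
Qed.
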